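(* Let $H=\mathbb R^d$, $d\ge1$. Let $b:H\to H$ be continuously differentiable and assume there exist $\omega>0$, $a\ge0$, $K>0$, $N\in\mathbb N$ such that for all $x\in H$: $\langle b(x),x\rangle\le-\omega|x|^2+a$ and $|b(x)|+\|b'(x)\|\le K(1+|x|^{2N})$. Let $\nu$ be the invariant probability measure of the transition semigroup of $dX(t)=b(X(t))\,dt+dW(t)$. Let $(e_1,\dots,e_d)$ be an orthonormal basis of $H$, and for $z\in H$ let $v_z$ be the function in $L^1(H,\nu)$ with $\int_H\langle D\varphi,z\rangle d\nu=\int_Hv_z\varphi\,d\nu$ for all $\varphi\in C^1_b(H)$. Fix $p>1$ and $q=\frac p{p-1}$, and let $D^*$ be the adjoint of the gradient as defined below. Let $F(x)=\sum_{h=1}^d f_h(x)e_h$ with $f_h\in C^1_b(H)$, $h=1,\dots,d$. Then $F$ belongs to the domain of $D^*$ and $$D^*(F)=-\operatorname{div}F+\sum_{h=1}^d v_{e_h}f_h.$$ Moreover, for every $\varphi\in C^2_b(H)$, $$-\tfrac12\,D^*(D\varphi)=\tfrac12\,\Delta\varphi-\tfrac12\sum_{h=1}^d v_{e_h}\,D_h\varphi,$$ where $D_h\varphi=\langle D\varphi,e_h\rangle$.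
   Context: $W$ is a standard $\mathbb R^d$-valued Brownian motion; $\nu$ is the (unique) invariant probability measure of $P_t\varphi(x)=\mathbb E[\varphi(X(t,x))]$. The functions $v_z$ exist and lie in $L^r(H,\nu)$ for all $r\in[1,\infty)$. Adjoint: $F\in L^q(H,\nu;H)$ belongs to the domain of $D^*$ iff there exists $g\in L^q(H,\nu)$ with $\int_H\langle D\varphi,F\rangle\,d\nu=\int_H\varphi\,g\,d\nu$ for all $\varphi\in C^1_b(H)$ (equivalently, iff $|\int_H\langle D\varphi,F\rangle d\nu|\le K_F\|\varphi\|_{L^p(H,\nu)}$ for all $\varphi\in C^1_b(H)$); then $D^*(F)=g$. This is the adjoint of the closure in $L^p(H,\nu)$ of the gradient $D:C^1_b(H)\to L^p(H,\nu;H)$. $C^k_b(H)$ denotes bounded functions with bounded continuous derivatives up to order $k$. *)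

From HB Require Import structures.
From mathcomp Require Import all_boot all_order all_algebra.
From mathcomp Require Import all_classical all_reals all_analysis.
Set Implicit Arguments. Unset Strict Implicit. Unset Printing Implicit Defensive.
Import Order.TTheory GRing.Theory Num.Theory.
Import numFieldNormedType.Exports.
Local Open Scope classical_set_scope.
Local Open Scope ring_scope.

Section defs.
Variables (R : realType) (d : nat).
Notation H := 'rV[R]_d.

Definition Hborel := g_sigma_algebraType (@open H).

Definition ev (i : 'I_d) : H := delta_mx 0 i.
Definition dotH (x y : H) : R := \sum_(i < d) x 0 i * y 0 i.
Definition normH (x : H) : R := Num.sqrt (dotH x x).
Definition gradH (f : H -> R) (x : H) : H := \row_i ('D_(ev i) f x).
Definition lapH (f : H -> R) (x : H) : R := \sum_(i < d) 'D_(ev i) ('D_(ev i) f) x.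
Definition divH (F : H -> H) (x : H) : R :=
  \sum_(i < d) 'D_(ev i) (fun y => F y 0 i) x.
Definition opnormH (L : H -> H) : R := sup [set normH (L h) | h in [set h | normH h <= 1]].
Definition C1H (f : H -> H) :=
  (forall x, differentiable f x) /\ forall i, continuous ('D_(ev i) f).
Definition boundedH (f : H -> R) := exists M : R, forall x, `|f x| <= M.
Definition Cb1 (f : H -> R) :=
  [/\ boundedH f, (forall x, differentiable f x),
      (forall i, continuous ('D_(ev i) f)) & (forall i, boundedH ('D_(ev i) f))].
Definition Cb2 (f : H -> R) := Cb1 f /\ forall i, Cb1 ('D_(ev i) f).
Definition orthonormalH (e : 'I_d -> H) :=
  forall h k, dotH (e h) (e k) = (h == k)%:R.

Definition brownian {dO : measure_display} {O : measurableType dO}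
  (P : probability O R) (W : R -> O -> H) :=
  [/\ (forall w, W 0 w = 0),
      (forall w, {within [set t | 0 <= t], continuous (fun t => W t w)}),
      (forall t j, measurable_fun setT (fun w => W t w 0 j)) &
      (forall (n : nat) (t : nat -> R), 0 <= t 0%N -> (forall k, t k < t k.+1) ->
        forall B : 'I_n -> 'I_d -> set R, (forall k j, measurable (B k j)) ->
        P [set w | forall (k : 'I_n) (j : 'I_d), B k j (W (t k.+1) w 0 j - W (t k) w 0 j)]
        = (\prod_(k < n) \prod_(j < d)
             normal_prob 0 (Num.sqrt (t k.+1 - t k)) (B k j))%E)].

Definition sde_solution {O : Type} (b : H -> H) (W : R -> O -> H)
  (X : R -> H -> O -> H) :=
  forall x w, {within [set t | 0 <= t], continuous (fun t => X t x w)} /\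
    forall t, 0 <= t -> X t x w =
      x + \row_j (Rintegral lebesgue_measure `[0, t] (fun s => b (X s x w) 0 j))
        + W t w.

Definition Pt {dO : measure_display} {O : measurableType dO}
  (P : probability O R) (X : R -> H -> O -> H) (t : R) (phi : H -> R) (x : H) : R :=
  fine (\int[P]_w (phi (X t x w))%:E).

Definition invariant_measure {dO : measure_display} {O : measurableType dO}
  (P : probability O R) (X : R -> H -> O -> H) (nu : probability Hborel R) :=
  forall t, 0 <= t -> forall phi : H -> R, continuous phi -> boundedH phi ->
    (\int[nu]_x (Pt P X t phi x)%:E = \int[nu]_x (phi x)%:E)%E.

Definition inLq (nu : probability Hborel R) (q : R) (f : H -> R) :=
  measurable_fun [set: Hborel] f /\ (\int[nu]_x (`|f x| `^ q)%:E < +oo)%E.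

Definition inLqH (nu : probability Hborel R) (q : R) (F : H -> H) :=
  (forall j, measurable_fun [set: Hborel] (fun x => F x 0 j)) /\
  (\int[nu]_x (normH (F x) `^ q)%:E < +oo)%E.

(* F is in the domain of D^* (in L^q) and D^*(F) = g *)
Definition Dstar_is (nu : probability Hborel R) (q : R) (F : H -> H) (g : H -> R) :=
  [/\ inLqH nu q F, inLq nu q g &
     forall phi, Cb1 phi ->
       (\int[nu]_x (dotH (gradH phi x) (F x))%:E = \int[nu]_x (phi x * g x)%:E)%E].
End defs.

From HB Require Import structures.
From mathcomp Require Import all_boot all_order all_algebra.
From mathcomp Require Import all_classical all_reals all_analysis.
From mathcomp Require Import measurable_realfun lra.
Import Order.TTheory GRing.Theory Num.Theory.
Import numFieldNormedType.Exports.
Local Open Scope classical_set_scope.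
Local Open Scope ring_scope.

(* Integration by parts along a direction z: applying the defining identity of
   v_z to the product psi * f and using the product rule gives
     int f <D psi, z> dnu = int psi (v_z f - <D f, z>) dnu
   for f, psi in C^1_b.  Summing over the coordinates of F = sum_h f_h e_h gives
   the formula for D^*(F); the L^q bounds only use that the f_h and their
   derivatives are bounded and that v_z lies in every L^r.  The second identity
   is the case f_h = <D phi, e_h>, since D phi = sum_h <D phi, e_h> e_h and
   div (D phi) = Delta phi.  The drift, the noise and the invariance of nu enter
   only through the assumed properties of v. *)

Section smooth_functions.
Context {R : realType} {d : nat}.
Local Notation H := 'rV[R]_d.
Implicit Types (f g : H -> R) (x w : H).

Lemma boundedH_mul {f g} : boundedH f -> boundedH g -> boundedH (fun x => f x * g x).
Proof. by move=> [M hM] [N hN]; exists (M * N) => x; rewrite normrM ler_pM. Qed.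

Lemma boundedH_add {f g} : boundedH f -> boundedH g -> boundedH (fun x => f x + g x).
Proof.
move=> [M hM] [N hN]; exists (M + N) => x.
by rewrite (le_trans (ler_normD _ _)) // lerD.
Qed.

Lemma boundedH_bounded {f} : boundedH f -> [bounded f x | x in [set: H]].
Proof.
move=> [M hM]; exists M; split; first exact: num_real.
by move=> N hN x _; exact: le_trans (hM x) (ltW hN).
Qed.

Lemma Cb1_differentiable {f} : Cb1 f -> forall x, differentiable f x.
Proof. by case. Qed.

Lemma Cb1_continuous {f} : Cb1 f -> continuous f.
Proof. by move=> /Cb1_differentiable df x; apply: differentiable_continuous. Qed.

Lemma deriveMx {f g x} w : differentiable f x -> differentiable g x ->
  'D_w (fun y => f y * g y) x = f x * 'D_w g x + g x * 'D_w f x.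
Proof. by move=> df dg; rewrite (deriveM (diff_derivable df) (diff_derivable dg)). Qed.

Lemma deriveMrx {f x} (c : R) w : differentiable f x ->
  'D_w (fun y => f y * c) x = 'D_w f x * c.
Proof.
move=> df; rewrite (deriveMx w df (differentiable_cst c x)).
by rewrite derive_cst mulr0 add0r mulrC.
Qed.

Lemma derive_sumx {n} {F : 'I_n -> H -> R} {x} w :
  (forall j, differentiable (F j) x) ->
  'D_w (fun y => \sum_(j < n) F j y) x = \sum_(j < n) 'D_w (F j) x.
Proof.
move=> dF; rewrite -fct_sumE.
by apply: derive_sum => j; exact: diff_derivable.
Qed.

Lemma Cb1_cst (c : R) : Cb1 (fun _ : H => c).
Proof.
have D0 i : 'D_(ev R i) (fun _ : H => c) = fun _ => 0.
  by apply/funext => x; exact: derive_cst.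
split=> [|x|i|i]; rewrite ?D0.
- by exists `|c|.
- exact: differentiable_cst.
- exact: cst_continuous.
- by exists 0 => x; rewrite normr0.
Qed.

Lemma Cb1_add {f g} : Cb1 f -> Cb1 g -> Cb1 (fun x => f x + g x).
Proof.
move=> [bf df cf bdf] [bg dg cg bdg].
have DD i : 'D_(ev R i) (fun x => f x + g x) =
            fun x => 'D_(ev R i) f x + 'D_(ev R i) g x.
  apply/funext => x.
  by rewrite (deriveD (diff_derivable (df x)) (diff_derivable (dg x))).
split=> [|x|i x|i]; rewrite ?DD.
- exact: boundedH_add.
- exact: differentiableD.
- exact: continuousD (cf i x) (cg i x).
- exact: boundedH_add.
Qed.

Lemma Cb1_mul {f g} : Cb1 f -> Cb1 g -> Cb1 (fun x => f x * g x).
Proof.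
move=> hf hg; have cf := Cb1_continuous hf; have cg := Cb1_continuous hg.
case: hf hg => [bf df cdf bdf] [bg dg cdg bdg].
have DM i : 'D_(ev R i) (fun x => f x * g x) =
            fun x => f x * 'D_(ev R i) g x + g x * 'D_(ev R i) f x.
  by apply/funext => x; exact: deriveMx.
split=> [|x|i x|i]; rewrite ?DM.
- exact: boundedH_mul.
- exact: differentiableM.
- exact: continuousD (continuousM (cf x) (cdg i x)) (continuousM (cg x) (cdf i x)).
- by apply: boundedH_add; apply: boundedH_mul.
Qed.

Lemma Cb1_sum {n} {F : 'I_n -> H -> R} :
  (forall j, Cb1 (F j)) -> Cb1 (fun x => \sum_(j < n) F j x).
Proof.
move=> hF; rewrite /index_enum; elim: (Finite.enum _) => [|j s IH].
  by under eq_fun do rewrite big_nil; exact: Cb1_cst.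
by under eq_fun do rewrite big_cons; exact: Cb1_add.
Qed.

Lemma dotH_gradE f w :
  (fun x => dotH (gradH f x) w) = fun x => \sum_(j < d) 'D_(ev R j) f x * w 0 j.
Proof. by apply/funext => x; apply: eq_bigr => j _; rewrite mxE. Qed.

Lemma Cb1_dot_grad {f} w : Cb2 f -> Cb1 (fun x => dotH (gradH f x) w).
Proof.
move=> [_ Cb1D]; rewrite dotH_gradE; apply: Cb1_sum => j.
exact: Cb1_mul (Cb1D j) (Cb1_cst _).
Qed.

End smooth_functions.

Section vector_calculus.
Context {R : realType} {d : nat}.
Local Notation H := 'rV[R]_d.
Implicit Types (f g : H -> R) (x u w z : H).

Lemma dotH_addl u w z : dotH (u + w) z = dotH u z + dotH w z.
Proof. by rewrite /dotH -big_split; apply: eq_bigr => i _; rewrite mxE mulrDl. Qed.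

Lemma dotH_scalel (k : R) u z : dotH (k *: u) z = k * dotH u z.
Proof. by rewrite /dotH big_distrr; apply: eq_bigr => i _; rewrite mxE -mulrA. Qed.

Lemma dotH_sumr n u (c : 'I_n -> R) (w : 'I_n -> H) :
  dotH u (\sum_(h < n) c h *: w h) = \sum_(h < n) c h * dotH u (w h).
Proof.
rewrite /dotH (eq_bigr (fun i => \sum_(h < n) c h * (u 0 i * w h 0 i))).
  by rewrite exchange_big; apply: eq_bigr => h _; rewrite big_distrr.
by move=> i _; rewrite summxE big_distrr; apply: eq_bigr => h _; rewrite mxE mulrCA.
Qed.

Lemma gradH_mul {f g x} : differentiable f x -> differentiable g x ->
  gradH (fun y => f y * g y) x = f x *: gradH g x + g x *: gradH f x.
Proof. by move=> df dg; apply/matrixP => i j; rewrite !mxE deriveMx. Qed.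

Lemma divH_coord_field {n} (f : 'I_n -> H -> R) (e : 'I_n -> H) x :
  (forall h, differentiable (f h) x) ->
  divH (fun y => \sum_(h < n) f h y *: e h) x =
  \sum_(h < n) dotH (gradH (f h) x) (e h).
Proof.
move=> df; rewrite /divH /dotH.
transitivity (\sum_(i < d) \sum_(h < n) 'D_(ev R i) (f h) x * e h 0 i).
  apply: eq_bigr => i _.
  have -> : (fun y => (\sum_(h < n) f h y *: e h) 0 i) =
            (fun y => \sum_(h < n) f h y * e h 0 i).
    by apply/funext => y; rewrite summxE; apply: eq_bigr => h _; rewrite mxE.
  rewrite derive_sumx; last by move=> h; apply: differentiableM.
  by apply: eq_bigr => h _; rewrite deriveMrx.
by rewrite exchange_big; apply: eq_bigr => h _; apply: eq_bigr => i _; rewrite mxE.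
Qed.

Lemma divH_gradH f : divH (gradH f) = lapH f.
Proof.
by apply/funext => x; apply: eq_bigr => i _; congr ('D__ _ _); apply/funext => y; rewrite mxE.
Qed.

Lemma orthonormal_expansion (e : 'I_d -> H) w : orthonormalH e ->
  w = \sum_(h < d) dotH w (e h) *: e h.
Proof.
move=> He; pose E : 'M[R]_d := \matrix_(h, k) e h 0 k.
have EET : E *m E^T = 1%:M.
  by apply/matrixP => h k; rewrite !mxE -He; apply: eq_bigr => l _; rewrite !mxE.
apply/rowP => j; rewrite -[in LHS](mulmx1 w) -(mulmx1C EET) mulmxA.
rewrite summxE mxE; apply: eq_bigr => h _.
by rewrite !mxE; congr (_ * _); apply: eq_bigr => l _; rewrite !mxE.
Qed.

End vector_calculus.

Lemma powR_normD_le {R : realType} (a b q : R) : 0 <= q ->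
  `|a + b| `^ q <= 2 `^ q * (`|a| `^ q + `|b| `^ q).
Proof.
move=> q0; wlog ab : a b / `|a| <= `|b|.
  move=> W; have [|/ltW] := leP `|a| `|b|; first exact: W.
  by rewrite addrC [X in _ * X]addrC; apply: W.
have le2b : `|a + b| <= 2 * `|b|.
  by rewrite (le_trans (ler_normD _ _)) // mulr2n mulrDl mul1r lerD2r.
apply: le_trans (ge0_ler_powR q0 _ _ le2b) _; rewrite ?nnegrE ?mulr_ge0 //.
by rewrite powRM // ler_pM2l ?powR_gt0 // lerDr powR_ge0.
Qed.

Section integrability.
Context {R : realType} {d : nat} (nu : probability (Hborel R d) R).
Local Notation H := 'rV[R]_d.
Implicit Types (f g : H -> R) (q : R).

Lemma continuous_Hborel_measurable f : continuous f -> measurable_fun [set: Hborel R d] f.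
Proof.
move/continuousP=> cf; apply: (measurability _ (RGenOpens.measurableE R)).
move=> _ [_ [a [b ->] <-]]; rewrite setTI; apply: sub_sigma_algebra.
exact/cf/interval_open.
Qed.

Definition bdd_measurable f := measurable_fun [set: Hborel R d] f /\ boundedH f.

Lemma bdd_measurable_Cb1 {f} : Cb1 f -> bdd_measurable f.
Proof.
by move=> hf; split; [exact: continuous_Hborel_measurable (Cb1_continuous hf) | case: hf].
Qed.

Lemma bdd_measurable_partial {f} i : Cb1 f -> bdd_measurable ('D_(ev R i) f).
Proof. by case=> _ _ cf bf; split; [exact: continuous_Hborel_measurable | exact: bf]. Qed.

Lemma bdd_measurable_cst (c : R) : bdd_measurable (fun _ => c).
Proof. by split => //; exists `|c|. Qed.

Lemma bdd_measurable_mul {f g} :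
  bdd_measurable f -> bdd_measurable g -> bdd_measurable (fun x => f x * g x).
Proof. by move=> [mf bf] [mg bg]; split; [exact: measurable_funM | exact: boundedH_mul]. Qed.

Lemma bdd_measurable_add {f g} :
  bdd_measurable f -> bdd_measurable g -> bdd_measurable (fun x => f x + g x).
Proof. by move=> [mf bf] [mg bg]; split; [exact: measurable_funD | exact: boundedH_add]. Qed.

Lemma bdd_measurable_sum {n} {F : 'I_n -> H -> R} :
  (forall j, bdd_measurable (F j)) -> bdd_measurable (fun x => \sum_(j < n) F j x).
Proof.
move=> hF; rewrite /index_enum; elim: (Finite.enum _) => [|j s IH].
  by under eq_fun do rewrite big_nil; exact: bdd_measurable_cst.
by under eq_fun do rewrite big_cons; exact: bdd_measurable_add.
Qed.

Lemma bdd_measurable_dot_grad {f} (w : H) :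
  Cb1 f -> bdd_measurable (fun x => dotH (gradH f x) w).
Proof.
move=> hf; rewrite dotH_gradE; apply: bdd_measurable_sum => j.
exact: bdd_measurable_mul (bdd_measurable_partial j hf) (bdd_measurable_cst _).
Qed.

Lemma bdd_measurable_integrable {f} :
  bdd_measurable f -> nu.-integrable [set: Hborel R d] (EFin \o f).
Proof.
move=> [mf bf]; apply: measurable_bounded_integrable => //.
  exact: le_lt_trans (probability_le1 _ measurableT) (ltry _).
exact: boundedH_bounded.
Qed.

Lemma inLq1_integrable {f} : inLq nu 1 f -> nu.-integrable [set: Hborel R d] (EFin \o f).
Proof.
move=> [mf fi]; apply/integrableP; split; first exact/measurable_EFinP.
apply: le_lt_trans fi; rewrite le_eqVlt; apply/orP; left; apply/eqP.
by apply: eq_integral => x _ /=; rewrite powRr1.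
Qed.

Lemma integrable_inLq1_mul {f g} : inLq nu 1 f -> bdd_measurable g ->
  nu.-integrable [set: Hborel R d] (EFin \o (fun x => f x * g x)).
Proof.
move=> hf [mg bg].
exact (integrableMl measurableT (inLq1_integrable hf) mg (boundedH_bounded bg)).
Qed.

Lemma inLq_integrable {q f} : inLq nu q f ->
  nu.-integrable [set: Hborel R d] (EFin \o (fun x => `|f x| `^ q)).
Proof.
move=> [mf fi]; apply/integrableP; split.
  exact/measurable_EFinP/(measurableT_comp (measurable_powR _))/measurableT_comp.
apply: le_lt_trans fi; rewrite le_eqVlt; apply/orP; left; apply/eqP.
by apply: eq_integral => x _ /=; rewrite ger0_norm // powR_ge0.
Qed.

Lemma integrable_inLq {q f} : measurable_fun [set: Hborel R d] f ->
  nu.-integrable [set: Hborel R d] (EFin \o (fun x => `|f x| `^ q)) -> inLq nu q f.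
Proof. by move=> mf fi; split => //; exact (integrable_lty measurableT fi). Qed.

Lemma inLq_bdd_measurable {q f} : 0 <= q -> bdd_measurable f -> inLq nu q f.
Proof.
move=> q0 [mf [M hM]]; apply: integrable_inLq => //.
apply: bdd_measurable_integrable; split.
  exact/(measurableT_comp (measurable_powR _))/measurableT_comp.
exists (M `^ q) => x; rewrite ger0_norm ?powR_ge0 //.
by apply: ge0_ler_powR; rewrite ?nnegrE // (le_trans _ (hM x)).
Qed.

Lemma inLq_add {q f g} : 0 <= q -> inLq nu q f -> inLq nu q g ->
  inLq nu q (fun x => f x + g x).
Proof.
move=> q0 hf hg; have mfg := measurable_funD hf.1 hg.1.
apply: integrable_inLq => //.
have i2 := integrableZl measurableT (2 `^ q)
  (integrableD measurableT (inLq_integrable hf) (inLq_integrable hg)).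
apply: (le_integrable measurableT _ _ i2).
  exact/measurable_EFinP/(measurableT_comp (measurable_powR _))/measurableT_comp.
move=> x _ /=; rewrite lee_fin.
rewrite [X in X <= _]ger0_norm ?powR_ge0 //.
rewrite [X in _ <= X]ger0_norm ?mulr_ge0 ?addr_ge0 ?powR_ge0 //.
exact: powR_normD_le.
Qed.

Lemma inLq_mul_bdd {q f g} : 0 <= q -> inLq nu q f -> bdd_measurable g ->
  inLq nu q (fun x => f x * g x).
Proof.
move=> q0 hf [mg [M hM]]; have mfg := measurable_funM hf.1 mg.
apply: integrable_inLq => //.
have iM := integrableZl measurableT (M `^ q) (inLq_integrable hf).
apply: (le_integrable measurableT _ _ iM).
  exact/measurable_EFinP/(measurableT_comp (measurable_powR _))/measurableT_comp.
move=> x _ /=; rewrite lee_fin.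
rewrite [X in X <= _]ger0_norm ?powR_ge0 //.
rewrite [X in _ <= X]ger0_norm ?mulr_ge0 ?powR_ge0 //.
rewrite normrM powRM // mulrC ler_wpM2r ?powR_ge0 //.
by apply: ge0_ler_powR; rewrite ?nnegrE // (le_trans _ (hM x)).
Qed.

Lemma inLq_sum {q} {n} {F : 'I_n -> H -> R} : 0 <= q ->
  (forall h, inLq nu q (F h)) -> inLq nu q (fun x => \sum_(h < n) F h x).
Proof.
move=> q0 hF; rewrite /index_enum; elim: (Finite.enum _) => [|j s IH].
  by under eq_fun do rewrite big_nil; exact: inLq_bdd_measurable (bdd_measurable_cst _).
by under eq_fun do rewrite big_cons; exact: inLq_add.
Qed.

Lemma inLqH_Cb1 {q} {F : H -> H} : 0 <= q ->
  (forall j, Cb1 (fun x => F x 0 j)) -> inLqH nu q F.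
Proof.
move=> q0 hF; split=> [j|].
  exact: continuous_Hborel_measurable (Cb1_continuous (hF j)).
have [ms [M hM]] : bdd_measurable (fun x => dotH (F x) (F x)).
  by apply: bdd_measurable_Cb1; apply: Cb1_sum => j; apply: Cb1_mul.
have [_ Lq] : inLq nu q (fun x => normH (F x)).
  apply: inLq_bdd_measurable q0 _; split.
    exact: measurableT_comp (continuous_measurable_fun (@sqrt_continuous R)) ms.
  exists (Num.sqrt M) => x; rewrite ger0_norm ?sqrtr_ge0 // ler_sqrt.
    exact: le_trans (ler_norm _) (hM x).
  exact: le_trans (normr_ge0 _) (hM 0).
apply: le_lt_trans Lq; rewrite le_eqVlt; apply/orP; left; apply/eqP.
by apply: eq_integral => x _; rewrite ger0_norm // sqrtr_ge0.
Qed.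

End integrability.

Section integration_by_parts.
Context {R : realType} {d : nat} (nu : probability (Hborel R d) R).
Local Notation H := 'rV[R]_d.
Context {v : H -> H -> R}.
Hypothesis v_Lq : forall z r, 1 <= r -> inLq nu r (v z).
Hypothesis v_ibp : forall z phi, Cb1 phi ->
  (\int[nu]_x (dotH (gradH phi x) z)%:E = \int[nu]_x (v z x * phi x)%:E)%E.

Lemma integral_sumEFin {n} (F : 'I_n -> H -> R) :
  (forall h, nu.-integrable [set: Hborel R d] (EFin \o F h)) ->
  (\int[nu]_x (\sum_(h < n) F h x)%:E = \sum_(h < n) \int[nu]_x (F h x)%:E)%E.
Proof.
move=> iF; under eq_integral do rewrite -sumEFin.
exact: (integral_sum measurableT (f := fun h (x : Hborel R d) => (F h x)%:E)).
Qed.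

Lemma integrable_ibp_rhs {f psi} (z : H) : Cb1 f -> Cb1 psi ->
  nu.-integrable [set: Hborel R d]
    (EFin \o (fun x => psi x * (v z x * f x - dotH (gradH f x) z))).
Proof.
move=> hf hpsi.
have iB := integrable_inLq1_mul nu (v_Lq z 1 (lexx 1)) (bdd_measurable_Cb1 (Cb1_mul hpsi hf)).
have iC := bdd_measurable_integrable nu
  (bdd_measurable_mul (bdd_measurable_Cb1 hpsi) (bdd_measurable_dot_grad z hf)).
apply: (eq_integrable measurableT _ _ _ (integrableB measurableT iB iC)) => x _ /=.
by rewrite -EFinB mulrBr mulrCA mulrA.
Qed.

Lemma integration_by_parts_dir {f psi} (z : H) : Cb1 f -> Cb1 psi ->
  (\int[nu]_x (f x * dotH (gradH psi x) z)%:E =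
   \int[nu]_x (psi x * (v z x * f x - dotH (gradH f x) z))%:E)%E.
Proof.
move=> hf hpsi; have [df dpsi] := (Cb1_differentiable hf, Cb1_differentiable hpsi).
have iA := bdd_measurable_integrable nu
  (bdd_measurable_mul (bdd_measurable_Cb1 hf) (bdd_measurable_dot_grad z hpsi)).
have iB := integrable_inLq1_mul nu (v_Lq z 1 (lexx 1)) (bdd_measurable_Cb1 (Cb1_mul hpsi hf)).
have iC := bdd_measurable_integrable nu
  (bdd_measurable_mul (bdd_measurable_Cb1 hpsi) (bdd_measurable_dot_grad z hf)).
have product_rule : (\int[nu]_x (v z x * (psi x * f x))%:E =
    \int[nu]_x (psi x * dotH (gradH f x) z)%:E +
    \int[nu]_x (f x * dotH (gradH psi x) z)%:E)%E.
  rewrite -(v_ibp z _ (Cb1_mul hpsi hf)); transitivity (\int[nu]_x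
    (psi x * dotH (gradH f x) z + f x * dotH (gradH psi x) z)%:E)%E.
    by apply: eq_integral => x _; rewrite gradH_mul // dotH_addl !dotH_scalel.
  exact (integralD_EFin measurableT iC iA).
have -> : (\int[nu]_x (psi x * (v z x * f x - dotH (gradH f x) z))%:E =
    \int[nu]_x (v z x * (psi x * f x))%:E -
    \int[nu]_x (psi x * dotH (gradH f x) z)%:E)%E.
  rewrite -(integralB_EFin measurableT iB iC).
  by apply: eq_integral => x _; rewrite -EFinB mulrBr mulrCA mulrA.
rewrite product_rule [X in (X - _)%E]addeC addeK //.
exact (integrable_fin_num measurableT iC).
Qed.

Lemma Dstar_coord_field {n} {q : R} (e : 'I_n -> H) {f : 'I_n -> H -> R} :
  1 <= q -> (forall h, Cb1 (f h)) ->
  Dstar_is nu q (fun x => \sum_(h < n) f h x *: e h)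
    (fun x => - divH (fun y => \sum_(h < n) f h y *: e h) x
              + \sum_(h < n) v (e h) x * f h x).
Proof.
move=> q1 hf; have q0 := le_trans ler01 q1.
have divE x := divH_coord_field f e x (fun h => Cb1_differentiable (hf h) x).
split.
- apply: (inLqH_Cb1 nu q0) => j.
  have -> : (fun x => (\sum_(h < n) f h x *: e h) 0 j) =
            (fun x => \sum_(h < n) f h x * e h 0 j).
    by apply/funext => x; rewrite summxE; apply: eq_bigr => h _; rewrite mxE.
  by apply: Cb1_sum => h; apply: Cb1_mul (hf h) (Cb1_cst _).
- apply: (inLq_add nu q0).
  + apply: (inLq_bdd_measurable nu q0); under eq_fun => x do rewrite divE -mulN1r.
    apply: bdd_measurable_mul (bdd_measurable_cst _) (bdd_measurable_sum _) => h.
    exact: bdd_measurable_dot_grad.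
  + apply: (inLq_sum nu q0) => h.
    exact: (inLq_mul_bdd nu q0 (v_Lq _ _ q1) (bdd_measurable_Cb1 (hf h))).
- move=> psi hpsi.
  transitivity (\int[nu]_x (\sum_(h < n) f h x * dotH (gradH psi x) (e h))%:E)%E.
    by apply: eq_integral => x _; rewrite dotH_sumr.
  rewrite integral_sumEFin => [|h]; last first.
    exact/(bdd_measurable_integrable nu)/bdd_measurable_mul/bdd_measurable_dot_grad/hpsi/bdd_measurable_Cb1.
  under eq_bigr => h _ do rewrite (integration_by_parts_dir _ (hf h) hpsi).
  rewrite -integral_sumEFin => [|h]; last exact: integrable_ibp_rhs.
  by apply: eq_integral => x _; rewrite divE -mulr_sumr sumrB addrC.
Qed.

End integration_by_parts.

Theorem proposition3p7 (R : realType) (d : nat) (hd : (0 < d)%N)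
  (b : 'rV[R]_d -> 'rV[R]_d) (Hb : C1H b)
  (om a K : R) (N : nat) (hom : 0 < om) (ha : 0 <= a) (hK : 0 < K)
  (Hdiss : forall x, dotH (b x) x <= - om * normH x ^+ 2 + a)
  (Hgrowth : forall x, normH (b x) + opnormH ('d b x) <= K * (1 + normH x ^+ (2 * N)))
  (dO : measure_display) (O : measurableType dO) (P : probability O R)
  (W : R -> O -> 'rV[R]_d) (HW : brownian P W)
  (X : R -> 'rV[R]_d -> O -> 'rV[R]_d) (HX : sde_solution b W X)
  (nu : probability (Hborel R d) R) (Hnu : invariant_measure P X nu)
  (e : 'I_d -> 'rV[R]_d) (He : orthonormalH e)
  (v : 'rV[R]_d -> 'rV[R]_d -> R)
  (Hv_int : forall z r, 1 <= r -> inLq nu r (v z))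
  (Hv : forall z phi, Cb1 phi ->
     (\int[nu]_x (dotH (gradH phi x) z)%:E = \int[nu]_x (v z x * phi x)%:E)%E)
  (p q : R) (hp : 1 < p) (hq : q = p / (p - 1))
  (f : 'I_d -> 'rV[R]_d -> R) (Hf : forall h, Cb1 (f h)) :
  (exists g : 'rV[R]_d -> R,
     Dstar_is nu q (fun x => \sum_(h < d) f h x *: e h) g /\
     forall x, g x = - divH (fun y => \sum_(h < d) f h y *: e h) x
                      + \sum_(h < d) v (e h) x * f h x) /\
  (forall phi : 'rV[R]_d -> R, Cb2 phi ->
     exists g : 'rV[R]_d -> R,
       Dstar_is nu q (gradH phi) g /\
       forall x, - (1 / 2) * g x = 1 / 2 * lapH phi x
                 - 1 / 2 * \sum_(h < d) v (e h) x * dotH (gradH phi x) (e h)).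
Proof.
have q1 : 1 <= q by rewrite hq ler_pdivlMr ?subr_gt0 // mul1r gerBl.
split.
  by eexists; split; first exact: (Dstar_coord_field nu Hv_int Hv e q1 Hf).
move=> phi hphi; pose u h x := dotH (gradH phi x) (e h).
have grad_u : gradH phi = fun x => \sum_(h < d) u h x *: e h.
  by apply/funext => x; exact: orthonormal_expansion.
eexists; split.
  by rewrite grad_u; exact: (Dstar_coord_field nu Hv_int Hv e q1 (fun h => Cb1_dot_grad (e h) hphi)).
by move=> x; rewrite -grad_u divH_gradH; lra.
Qed.
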